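(* Let $d$ be a nonnegative integer and let $H$ be a multigraph of even order with $\phi(H) \le d+1$, and let $r$ be the number of vertices of degree $d+1$ in $H$. Let $S \subsetneq V(H)$ with $|S|$ odd, $|S|\ge 3$, such that $\langle S\rangle$ is $(d+1)$-full in $H$, i.e. $t(\langle S\rangle)=d+1$. Then $\Delta(H_S)\le d+1$, $\Gamma(H_S)\le d+1$, and $H_S$ has at most $r$ vertices of degree $d+1$. Also $\Delta(H_{S^c})\le d+1$ and $\Gamma(H_{S^c})\le d+1$, and if $H_{S^c}$ has more than $r$ vertices of degree $d+1$, then it has exactly $r+1$ vertices, each of degree $d+1$. Here $S^c=V(H)\setminus S$.
   Context: Multigraphs are finite and loopless, multiple edges allowed. For $S \subseteq V(H)$, $\langle S\rangle$ is the induced subgraph. For a multigraph $K$ of odd order $n(K)\ge 3$ with $e(K)$ edges, $t(K) = 2e(K)/(n(K)-1)$. $\Gamma(H) = \max\{t(\langle R\rangle) : R\subseteq V(H), |R| \text{ odd}, |R|\ge 3\}$ (statements about $\Gamma$ of a multigraph with no such $R$ are vacuous); $\phi(H) = \lceil \max\{\Delta(H),\Gamma(H)\}\rceil$. Shrinking: for a nonempty proper subset $S$ of $V(H)$, $H_S$ has vertex set $(V(H)\setminus S)\cup\{s\}$ for a new vertex $s$; its edges are the edges of $H - S$ together with, for each $u \notin S$, exactly as many edges $us$ as there are edges of $H$ joining $u$ to vertices of $S$. *)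

From HB Require Import structures.
From mathcomp Require Import all_boot all_order all_algebra.
Set Implicit Arguments. Unset Strict Implicit. Unset Printing Implicit Defensive.
Import Order.TTheory GRing.Theory Num.Theory.

(* A multigraph H is represented by a vertex set V : {set T} in a finite type T
   together with an edge-multiplicity function m : T -> T -> nat
   (m x y = number of edges joining x and y).  Only values on V matter.
   Multigraph axioms (symmetry, looplessness) are hypotheses of the theorem. *)

Section Multigraph.
Variable T : finType.
Implicit Types (V R S : {set T}) (m : T -> T -> nat).

Definition is_multigraph m : Prop :=
  (forall x y, m x y = m y x) /\ (forall x, m x x = 0%N).

Definition deg V m x : nat := \sum_(y in V) m x y.

Definition Delta V m : nat := \max_(x in V) deg V m x.

Definition nedges m R : nat := (\sum_(x in R) \sum_(y in R) m x y)./2.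

Definition tK m R : rat := ((2 * nedges m R)%:R / (#|R| - 1)%:R)%R.

(* Gamma(H) = max t(<R>) over R subset V, |R| odd, |R| >= 3
   (0 if there is no such R; statements about Gamma are then vacuous). *)
Definition Gamma V m : rat :=
  (\big[Num.max/0]_(R : {set T} | (R \subset V) && odd #|R| && (3 <= #|R|)%N)
     tK m R)%R.

Definition phi V m : int := Num.ceil (Num.max ((Delta V m)%:R)%R (Gamma V m)).

Definition nverts_deg V m k : nat := #|[set x in V | deg V m x == k]|.

(* Shrinking S to a new vertex s := None; old vertex u is Some u. *)
Definition shrinkV V S : {set option T} := None |: (Some @: (V :\: S)).

Definition shrinkm m S (a b : option T) : nat :=
  match a, b with
  | Some u, Some v => m u v
  | Some u, None => \sum_(w in S) m u w
  | None, Some v => \sum_(w in S) m v w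
  | None, None => 0%N
  end.

End Multigraph.

From HB Require Import structures.
From mathcomp Require Import all_boot all_order all_algebra.
From mathcomp Require Import zify.
Import Order.TTheory GRing.Theory Num.Theory.
Set Implicit Arguments. Unset Strict Implicit. Unset Printing Implicit Defensive.

(* Write e(A, B) for the number of ordered pairs of adjacent vertices in
   A x B.  Then phi(H) <= c says that all degrees are at most c and that
   e(R, R) <= c (|R| - 1) for every odd R.  Fullness of S means
   e(S, S) = c (|S| - 1), so the degree bound on S leaves at most c edges
   between S and its complement; this is the degree of the new vertex in both
   H_S and H_{S^c}, and it equals c only if every vertex of S has degree c,
   which gives the vertex counts.  An odd set of a shrunk graph containing the
   new vertex consists of an even set A of old vertices plus the new vertex;
   its density bound follows from the bound for the odd set A u S in H_S, and
   in H_{S^c} from the fullness of S compared with the bound for the odd set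
   S \ A and the degree bound on A. *)

Section EdgeSums.
Variables (T : finType) (m : T -> T -> nat).
Implicit Types (A B R V : {set T}).

Definition esum A B : nat := \sum_(x in A) \sum_(y in B) m x y.

Lemma esum_setDl A V B : A \subset V -> esum V B = esum A B + esum (V :\: A) B.
Proof. by move=> sAV; rewrite /esum (big_setID A) (setIidPr sAV). Qed.

Lemma esum_setDr A V B : A \subset V -> esum B V = esum B A + esum B (V :\: A).
Proof.
move=> sAV; rewrite /esum -big_split; apply: eq_bigr => x _.
by rewrite (big_setID A) (setIidPr sAV).
Qed.

Lemma esum_deg V A : esum A V = \sum_(x in A) deg V m x.
Proof. by []. Qed.

Lemma esum_le_deg V A c : {in A, forall x, deg V m x <= c} -> esum A V <= c * #|A|.
Proof.
move=> degA; rewrite esum_deg mulnC -sum_nat_const.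
by apply: leq_sum => x /degA.
Qed.

Lemma deg_eq_of_esum V A c : {in A, forall x, deg V m x <= c} ->
  esum A V = c * #|A| -> {in A, forall x, deg V m x = c}.
Proof.
move=> degA sumA x xA; apply/eqP; rewrite eqn_leq degA //=.
have rest : esum (A :\ x) V <= c * #|A :\ x|.
  by apply: esum_le_deg => y /setD1P[_ /degA].
move: sumA; rewrite esum_deg (big_setD1 x xA) /= -esum_deg (cardsD1 x A) xA add1n.
lia.
Qed.

Hypothesis msym : forall x y, m x y = m y x.

Lemma esumC A B : esum A B = esum B A.
Proof. by rewrite /esum exchange_big; apply: eq_bigr => x _; apply: eq_bigr. Qed.

Hypothesis mloop : forall x, m x x = 0.

Lemma esum_set1 x : esum [set x] [set x] = 0.
Proof. by rewrite /esum !big_set1. Qed.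

Lemma esum_even R : ~~ odd (esum R R).
Proof.
elim: {R}#|R| {-2}R (erefl #|R|) => [|n IH] R cardR.
  by move/cards0_eq: cardR => ->; rewrite /esum big_set0.
have [x xR] : exists x, x \in R.
  by apply/set0Pn/eqP => R0; rewrite R0 cards0 in cardR.
have sxR : [set x] \subset R by rewrite sub1set.
have cardRx : #|R :\ x| = n by move: cardR; rewrite (cardsD1 x) xR => -[].
rewrite (esum_setDl _ sxR) !(esum_setDr _ sxR) esum_set1 (esumC (R :\ x)).
by rewrite add0n addnA addnn oddD odd_double IH.
Qed.

End EdgeSums.

(* The singletons R add nothing (loops are absent), so this is the content of
   [phi V m <= c]. *)
Definition phi_bounded (T : finType) (V : {set T}) (m : T -> T -> nat) (c : nat) : Prop :=
  {in V, forall x, deg V m x <= c} /\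
  forall R : {set T}, R \subset V -> odd #|R| -> esum m R R <= c * (#|R| - 1).

Section Density.
Variables (T : finType) (m : T -> T -> nat).
Implicit Types (R V : {set T}) (c : nat).

Lemma tKE R : is_multigraph m -> tK m R = ((esum m R R)%:R / (#|R| - 1)%:R)%R.
Proof.
case=> msym mloop; rewrite /tK /nedges -/(esum m R R) mul2n.
have := odd_double_half (esum m R R).
by rewrite (negbTE (esum_even msym mloop R)) add0n => ->.
Qed.

Lemma tK_leE R c : is_multigraph m -> 1 < #|R| ->
  (tK m R <= c%:R)%R = (esum m R R <= c * (#|R| - 1)).
Proof.
by move=> mg R2; rewrite tKE // ler_pdivrMr ?ltr0n ?subn_gt0 // -natrM ler_nat.
Qed.

Lemma tK_eqE R c : is_multigraph m -> 1 < #|R| ->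
  (tK m R == c%:R)%R = (esum m R R == c * (#|R| - 1)).
Proof.
move=> mg R2; rewrite tKE // -[X in (_ == X)%R]divr1.
by rewrite eqr_div ?oner_eq0 ?pnatr_eq0 -?lt0n ?subn_gt0 // mulr1 -natrM eqr_nat.
Qed.

Lemma tK_le_Gamma V R : R \subset V -> odd #|R| -> 3 <= #|R| ->
  (tK m R <= Gamma V m)%R.
Proof.
move=> sRV oR R3; rewrite /Gamma (bigD1 R) /=; last by rewrite sRV oR R3.
by rewrite le_max lexx.
Qed.

Lemma Gamma_le V c : (forall R, R \subset V -> odd #|R| -> 3 <= #|R| ->
  (tK m R <= c%:R)%R) -> (Gamma V m <= c%:R)%R.
Proof.
move=> tKV; apply: (big_ind (fun q => q <= c%:R)%R) => //.
- by move=> p q; rewrite ge_max => -> ->.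
- by move=> R /andP[/andP[]]; exact: tKV.
Qed.

Lemma Delta_le_of_phi_bounded V c : phi_bounded V m c -> Delta V m <= c.
Proof. by case=> degV _; apply/bigmax_leqP. Qed.

Lemma Gamma_le_of_phi_bounded V c : is_multigraph m -> phi_bounded V m c ->
  (Gamma V m <= c%:R)%R.
Proof.
move=> mg [_ sumV]; apply: Gamma_le => R sRV oR R3.
by rewrite tK_leE ?sumV // ltnW.
Qed.

Lemma phi_bounded_of_le V c : is_multigraph m -> (phi V m <= c%:Z)%R ->
  phi_bounded V m c.
Proof.
move=> mg; rewrite /phi ceil_le_int ge_max ler_nat => /andP[DeltaV GammaV].
split=> [x xV | R sRV oR].
  exact: leq_trans (leq_bigmax_cond _ xV) DeltaV.
have [R3 | R2] := ltnP 2 #|R|.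
  by rewrite -tK_leE ?(le_trans (tK_le_Gamma sRV oR R3)) // ltnW.
have /cards1P[x ->] : #|R| == 1 by move: oR R2; case: #|R| => [|[|[]]].
by case: mg => msym mloop; rewrite esum_set1.
Qed.

End Density.

Section OptionSums.
Variable T : finType.

Lemma big_set_option (R : {set option T}) (F : option T -> nat) :
  \sum_(a in R) F a = (None \in R) * F None + \sum_(x in Some @^-1: R) F (Some x).
Proof.
rewrite (big_setID [set None]) /=; congr (_ + _).
- have [NR | NR] := boolP (None \in R).
    by rewrite (setIidPr _) ?sub1set // big_set1 mul1n.
  rewrite big_pred0 // => a; rewrite !inE andbC.
  by case: eqP => // ->; exact: negbTE.
- rewrite -[RHS](big_imset _ (in2W (@Some_inj _))) /=.
  apply: eq_bigl => -[x|]; rewrite !inE /=.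
  + by rewrite (mem_imset _ _ (@Some_inj _)) inE.
  + by apply/esym/imsetP => -[].
Qed.

Lemma card_set_option (R : {set option T}) :
  #|R| = (None \in R) + #|Some @^-1: R|.
Proof. by rewrite -!sum1_card big_set_option muln1. Qed.

End OptionSums.

Section Shrink.
Variables (T : finType) (m : T -> T -> nat) (V X : {set T}).

Lemma mem_shrinkV_Some x : (Some x \in shrinkV V X) = (x \in V :\: X).
Proof. by rewrite /shrinkV in_setU1 (mem_imset _ _ (@Some_inj _)). Qed.

Lemma mem_shrinkV_None : None \in shrinkV V X.
Proof. by rewrite /shrinkV setU11. Qed.

Lemma preimset_Some_shrinkV : Some @^-1: shrinkV V X = V :\: X.
Proof. by apply/setP => x; rewrite inE mem_shrinkV_Some. Qed.

Lemma card_shrinkV : #|shrinkV V X| = #|V :\: X|.+1.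
Proof. by rewrite card_set_option mem_shrinkV_None preimset_Some_shrinkV. Qed.

Lemma shrinkm_multigraph : is_multigraph m -> is_multigraph (shrinkm m X).
Proof. by case=> msym mloop; split=> [[x|] [y|] | [x|]] /=. Qed.

Lemma deg_shrink_None : deg (shrinkV V X) (shrinkm m X) None = esum m (V :\: X) X.
Proof. by rewrite /deg big_set_option mem_shrinkV_None preimset_Some_shrinkV. Qed.

Lemma deg_shrink_Some u : X \subset V ->
  deg (shrinkV V X) (shrinkm m X) (Some u) = deg V m u.
Proof.
move=> sXV; rewrite /deg big_set_option mem_shrinkV_None preimset_Some_shrinkV.
by rewrite [RHS](big_setID X) (setIidPr sXV) mul1n.
Qed.

Lemma esum_shrink (R : {set option T}) :
  esum (shrinkm m X) R R = (None \in R) * (esum m (Some @^-1: R) X).*2 +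
                           esum m (Some @^-1: R) (Some @^-1: R).
Proof.
set A := Some @^-1: R.
have row x : \sum_(b in R) shrinkm m X (Some x) b =
             (None \in R) * \sum_(w in X) m x w + \sum_(y in A) m x y.
  exact: big_set_option.
rewrite /esum big_set_option (eq_bigr _ (fun x _ => row x)) big_split /=.
rewrite -big_distrr big_set_option /= -/A.
by case: (None \in R); rewrite ?mul0n // !mul1n add0n addnA addnn.
Qed.

Lemma nverts_deg_shrink k : X \subset V ->
  nverts_deg (shrinkV V X) (shrinkm m X) k =
  (esum m (V :\: X) X == k) + #|[set x in V :\: X | deg V m x == k]|.
Proof.
move=> sXV; rewrite /nverts_deg card_set_option inE mem_shrinkV_None.
rewrite deg_shrink_None; congr (_ + _); apply: eq_card => x.
by rewrite [x \in _]in_set [Some x \in _]in_set mem_shrinkV_Some deg_shrink_Some // inE.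
Qed.

Lemma phi_bounded_shrink c : X \subset V -> phi_bounded V m c ->
  esum m (V :\: X) X <= c ->
  (forall A : {set T}, A \subset V :\: X -> ~~ odd #|A| ->
     esum m A A + (esum m A X).*2 <= c * #|A|) ->
  phi_bounded (shrinkV V X) (shrinkm m X) c.
Proof.
move=> sXV [degV sumV] cutX evenA; split=> [[u|] | R sR].
- by rewrite mem_shrinkV_Some deg_shrink_Some // => /setDP[/degV].
- by rewrite deg_shrink_None.
have sA : Some @^-1: R \subset V :\: X.
  by rewrite -preimset_Some_shrinkV preimsetS.
rewrite esum_shrink card_set_option; case: (None \in R) => /=.
- by rewrite add0n mul1n add1n subn1 addnC; exact: evenA.
- by rewrite mul0n !add0n; apply: sumV (subset_trans sA (subsetDl _ _)).
Qed.

End Shrink.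

Section FullSet.
Variables (T : finType) (m : T -> T -> nat) (V S : {set T}) (c : nat).
Hypothesis msym : forall x y, m x y = m y x.
Hypotheses (boundV : phi_bounded V m c) (sSV : S \subset V) (oddS : odd #|S|).
Hypothesis fullS : esum m S S = c * (#|S| - 1).

Local Notation Sc := (V :\: S).

Let degS : {in S, forall x, deg V m x <= c}.
Proof. by move=> x /(subsetP sSV); apply: (proj1 boundV). Qed.

Let esum_S_V : esum m S V = c * (#|S| - 1) + esum m S Sc.
Proof. by rewrite (esum_setDr m _ sSV) fullS. Qed.

Let c_card_S : c * #|S| = c * (#|S| - 1) + c.
Proof. by rewrite -mulnSr subn1 prednK ?odd_gt0. Qed.

Lemma esum_cut_full_le : esum m S Sc <= c.
Proof. by have := esum_le_deg degS; rewrite esum_S_V c_card_S leq_add2l. Qed.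

Lemma deg_full_of_cut : esum m S Sc = c -> {in S, forall x, deg V m x = c}.
Proof. by move=> cut; apply: deg_eq_of_esum degS _; rewrite esum_S_V cut. Qed.

Lemma esum_even_compl_le (A : {set T}) : A \subset Sc -> ~~ odd #|A| ->
  esum m A A + (esum m A S).*2 <= c * #|A|.
Proof.
rewrite subsetD => /andP[sAV dAS] evenA.
have sSAS : S \subset A :|: S := subsetUr A S.
have AS_S : (A :|: S) :\: S = A by rewrite setDUl setDv setU0; apply/setDidPl.
have cardAS : #|A :|: S| = #|A| + #|S| by rewrite cardsU disjoint_setI0 // cards0 subn0.
have := proj2 boundV (A :|: S); rewrite subUset sAV sSV cardAS oddD (negbTE evenA).
move=> /(_ isT oddS); rewrite (esum_setDl m _ sSAS) !(esum_setDr m _ sSAS) AS_S.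
(* Subtract the fullness of S from the density bound of A u S. *)
rewrite fullS (esumC msym S A) -addnBA ?odd_gt0 // mulnDr -addnn; lia.
Qed.

Lemma esum_even_full_le (A : {set T}) : A \subset S -> ~~ odd #|A| ->
  esum m A A + (esum m A Sc).*2 <= c * #|A|.
Proof.
move=> sAS evenA; set B := S :\: A.
have cardS : #|S| = #|A| + #|B| by rewrite -(cardsID A S) (setIidPr sAS).
have oddB : odd #|B| by move: oddS; rewrite cardS oddD (negbTE evenA).
have sumB := proj2 boundV B (subset_trans (subsetDl S A) sSV) oddB.
have degA : esum m A V <= c * #|A|.
  by apply: esum_le_deg => x /(subsetP sAS); apply: degS.
(* Fullness of S against the bound on B gives e(A, A) + 2 e(A, B) >= c |A|,
   so the degree bound on A forces e(A, Sc) <= e(A, B). *)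
move: fullS degA; rewrite (esum_setDl m _ sAS) !(esum_setDr m _ sAS) -/B.
rewrite (esum_setDr m _ sSV) (esum_setDr m _ sAS) -/B (esumC msym B A) cardS.
rewrite -addnBA ?odd_gt0 // mulnDr; lia.
Qed.

Let setD_compl : V :\: Sc = S.
Proof. by rewrite setDDr setDv set0U; apply/setIidPr. Qed.

Lemma phi_bounded_shrink_full : phi_bounded (shrinkV V S) (shrinkm m S) c.
Proof.
apply: phi_bounded_shrink => //; last exact: esum_even_compl_le.
by rewrite (esumC msym); exact: esum_cut_full_le.
Qed.

Lemma phi_bounded_shrink_compl : phi_bounded (shrinkV V Sc) (shrinkm m Sc) c.
Proof.
apply: phi_bounded_shrink; rewrite ?setD_compl ?subsetDl //.
- exact: esum_cut_full_le.
- exact: esum_even_full_le.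
Qed.

Let full_sub_of_cut : esum m S Sc = c ->
  S \subset [set x in V | deg V m x == c].
Proof.
move=> cut; apply/subsetP => x xS.
by rewrite inE (subsetP sSV) // (deg_full_of_cut cut xS) eqxx.
Qed.

Lemma nverts_deg_shrink_full :
  nverts_deg (shrinkV V S) (shrinkm m S) c <= nverts_deg V m c.
Proof.
rewrite nverts_deg_shrink // (esumC msym) /nverts_deg.
set P := [set x in V | deg V m x == c].
have -> : [set x in Sc | deg V m x == c] = P :\: S.
  by apply/setP => x; rewrite !inE andbA.
rewrite -(cardsID S P) leq_add2r.
case: eqP => // /full_sub_of_cut sSP.
by rewrite (setIidPr sSP) odd_gt0.
Qed.

Lemma nverts_deg_shrink_compl :
  nverts_deg V m c < nverts_deg (shrinkV V Sc) (shrinkm m Sc) c ->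
  #|shrinkV V Sc| = (nverts_deg V m c).+1 /\
  {in shrinkV V Sc, forall x, deg (shrinkV V Sc) (shrinkm m Sc) x = c}.
Proof.
rewrite nverts_deg_shrink ?subsetDl // setD_compl.
set Q := [set x in S | deg V m x == c].
have QP : #|Q| <= nverts_deg V m c.
  by apply/subset_leq_card/subsetP => x; rewrite !inE => /andP[/(subsetP sSV) -> ->].
case: eqP => [cut | _]; last by rewrite add0n ltnNge QP.
have SQ : Q = S.
  by apply/setP => x; rewrite inE andb_idr // => /(deg_full_of_cut cut) ->.
have SP : #|S| <= nverts_deg V m c := subset_leq_card (full_sub_of_cut cut).
rewrite SQ card_shrinkV setD_compl => lt_r; split; first lia.
move=> [u|]; rewrite ?mem_shrinkV_Some ?setD_compl => uS.
- by rewrite deg_shrink_Some ?subsetDl ?deg_full_of_cut.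
- by rewrite deg_shrink_None setD_compl.
Qed.

End FullSet.

Theorem mainTheorem7 (T : finType) (V : {set T}) (m : T -> T -> nat) (d : nat)
  (S : {set T}) :
  is_multigraph m ->
  ~~ odd #|V| ->
  (phi V m <= (d.+1)%:Z)%R ->
  S \proper V -> odd #|S| -> (3 <= #|S|)%N ->
  tK m S = ((d.+1)%:R)%R ->
  let r := nverts_deg V m d.+1 in
  let Sc := V :\: S in
  [/\ (Delta (shrinkV V S) (shrinkm m S) <= d.+1)%N,
      (Gamma (shrinkV V S) (shrinkm m S) <= ((d.+1)%:R)%R)%R &
      (nverts_deg (shrinkV V S) (shrinkm m S) d.+1 <= r)%N] /\
  [/\ (Delta (shrinkV V Sc) (shrinkm m Sc) <= d.+1)%N,
      (Gamma (shrinkV V Sc) (shrinkm m Sc) <= ((d.+1)%:R)%R)%R &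
      ((r < nverts_deg (shrinkV V Sc) (shrinkm m Sc) d.+1)%N ->
        #|shrinkV V Sc| = r.+1 /\
        forall x, x \in shrinkV V Sc -> deg (shrinkV V Sc) (shrinkm m Sc) x = d.+1)].
Proof.
move=> mg _ phiV /proper_sub sSV oddS S3 tKS r Sc.
have [msym _] := mg.
have boundV := phi_bounded_of_le mg phiV.
have fullS : esum m S S = d.+1 * (#|S| - 1).
  by apply/eqP; rewrite -tK_eqE ?tKS // ltnW.
have boundS : phi_bounded (shrinkV V S) (shrinkm m S) d.+1.
  exact: phi_bounded_shrink_full.
have boundSc : phi_bounded (shrinkV V Sc) (shrinkm m Sc) d.+1.
  exact: phi_bounded_shrink_compl.
have mgS := shrinkm_multigraph S mg; have mgSc := shrinkm_multigraph Sc mg.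
split; split.
- exact: Delta_le_of_phi_bounded boundS.
- exact: Gamma_le_of_phi_bounded mgS boundS.
- exact: nverts_deg_shrink_full.
- exact: Delta_le_of_phi_bounded boundSc.
- exact: Gamma_le_of_phi_bounded mgSc boundSc.
- exact: nverts_deg_shrink_compl.
Qed.
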